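(* Let $G$ be a concurrent game structure, $T\subseteq S$, and assume all states of $T\cup W_2$ are absorbing. Given a player-1 selector $\xi_1$, the memoryless strategy $\overline{\xi}_1$ is proper if and only if for every pure player-2 selector $\xi_2$ and all states $s\in S$ we have $\Pr_s^{\overline{\xi}_1,\overline{\xi}_2}(\mathrm{Reach}(T\cup W_2))=1$.
   Context: Concurrent game structure $G=(S,M,\Gamma_1,\Gamma_2,\delta)$: finite states $S$, finite moves $M$, nonempty move sets $\Gamma_i(s)\subseteq M$, transition probabilities $\delta(s,a_1,a_2)\in\mathrm{Distr}(S)$ (moves chosen simultaneously and independently). A state is absorbing if every move pair leads back to it with probability 1. A selector for player $i$ assigns to each state $s$ a distribution on $\Gamma_i(s)$; it is pure if each such distribution is a point mass; $\overline{\xi}$ is the memoryless strategy playing $\xi$ at every step. Strategies map finite histories to distributions on available moves; $\Pr_s^{\pi_1,\pi_2}$ is the induced measure on plays from $s$. $\mathrm{Reach}(X)$ is the set of plays visiting $X$. $\mathrm{val}_1(\mathrm{Reach}(T))(s)=\sup_{\pi_1}\inf_{\pi_2}\Pr_s^{\pi_1,\pi_2}(\mathrm{Reach}(T))$ and $W_2=\{s:\mathrm{val}_1(\mathrm{Reach}(T))(s)=0\}$. A player-1 strategy $\pi_1$ is proper if for every player-2 strategy $\pi_2$ and all $s\in S\setminus(T\cup W_2)$, $\Pr_s^{\pi_1,\pi_2}(\mathrm{Reach}(T\cup W_2))=1$; a selector $\xi_1$ is proper if $\overline{\xi}_1$ is. *)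

From HB Require Import structures.
From mathcomp Require Import all_boot all_order all_algebra.
From mathcomp Require Import boolp classical_sets reals.
Set Implicit Arguments. Unset Strict Implicit. Unset Printing Implicit Defensive.
Import Order.TTheory GRing.Theory Num.Theory.
Local Open Scope ring_scope.
Local Open Scope classical_set_scope.

Section Game.
Variables (R : realType) (S M : finType).

Definition is_distr (T : finType) (d : {ffun T -> R}) : Prop :=
  (forall x, 0 <= d x) /\ \sum_(x : T) d x = 1.

Definition is_distr_on (T : finType) (A : {set T}) (d : {ffun T -> R}) : Prop :=
  is_distr d /\ (forall x, x \notin A -> d x = 0).

Record cgs := CGS {
  gam1 : S -> {set M};
  gam2 : S -> {set M};
  delta : S -> M -> M -> {ffun S -> R};
  gam1_nonempty : forall s, gam1 s != finset.set0;
  gam2_nonempty : forall s, gam2 s != finset.set0;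
  delta_distr : forall s a1 a2, is_distr (delta s a1 a2)
}.

Variable G : cgs.

(* A strategy maps a finite history (prefix of past states, current state)
   to a distribution on moves. *)
Definition strat := seq S -> S -> {ffun M -> R}.

Definition is_strat1 (pi : strat) : Prop :=
  forall h s, is_distr_on (gam1 G s) (pi h s).
Definition is_strat2 (pi : strat) : Prop :=
  forall h s, is_distr_on (gam2 G s) (pi h s).

Definition selector := S -> {ffun M -> R}.
Definition is_selector1 (xi : selector) : Prop :=
  forall s, is_distr_on (gam1 G s) (xi s).
Definition is_selector2 (xi : selector) : Prop :=
  forall s, is_distr_on (gam2 G s) (xi s).
Definition pure_selector (xi : selector) : Prop :=
  forall s, exists m : M, xi s = [ffun a => if a == m then 1 else 0].

Definition memoryless (xi : selector) : strat := fun _ s => xi s.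

(* Probability that the play from history (h, s) visits X within n steps,
   under strategies pi1, pi2 (h = past states, s = current state). *)
Fixpoint reach_within (pi1 pi2 : strat) (X : {set S}) (n : nat)
    (h : seq S) (s : S) : R :=
  if s \in X then 1 else
  match n with
  | 0 => 0
  | n'.+1 => \sum_(a1 : M) \sum_(a2 : M)
       pi1 h s a1 * pi2 h s a2 *
       \sum_(t : S) delta G s a1 a2 t * reach_within pi1 pi2 X n' (rcons h s) t
  end.

(* Pr_s^{pi1,pi2}(Reach X): by continuity of the measure, the supremum over n
   of the probability of visiting X within n steps. *)
Definition prob_reach (pi1 pi2 : strat) (X : {set S}) (s : S) : R :=
  sup (range (fun n => reach_within pi1 pi2 X n [::] s)).

Definition val1 (T : {set S}) (s : S) : R :=
  sup [set v | exists pi1, is_strat1 pi1 /\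
        v = inf [set p | exists pi2, is_strat2 pi2 /\ p = prob_reach pi1 pi2 T s]].

Definition W2 (T : {set S}) : {set S} := [set s | `[< val1 T s = 0 >]].

Definition absorbing (s : S) : Prop :=
  forall a1 a2, a1 \in gam1 G s -> a2 \in gam2 G s -> delta G s a1 a2 s = 1.

Definition is_proper (T : {set S}) (pi1 : strat) : Prop :=
  forall pi2, is_strat2 pi2 ->
  forall s, s \notin T :|: W2 T -> prob_reach pi1 pi2 (T :|: W2 T) s = 1.

Definition proper_selector (T : {set S}) (xi1 : selector) : Prop :=
  is_proper T (memoryless xi1).

End Game.

(** The sets [attr k] of states from which, against every move of player 2,
    [xi1] reaches [T :|: W2 T] with positive probability within [k] steps
    grow until they stabilise.  If the limit missed a state, player 2 could
    pick at every state outside it a move keeping the play outside with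
    probability one; that pure selector would reach the target with
    probability [0] from there.  Otherwise every state is in the limit, so
    against any strategy the target is reached within [k] steps with
    probability at least [eps > 0] from every history, and the probability of
    never reaching it after [j * k] steps is at most [(1 - eps) ^ j]. *)
From HB Require Import structures.
From mathcomp Require Import all_boot all_order all_algebra.
From mathcomp Require Import boolp classical_sets reals lra.
Set Implicit Arguments. Unset Strict Implicit. Unset Printing Implicit Defensive.
Import Order.TTheory GRing.Theory Num.Theory.
Local Open Scope ring_scope.

Lemma bernoulli_le1 (R : realFieldType) (eps : R) j : 0 <= eps <= 1 ->
  (1 - eps) ^+ j * (1 + j%:R * eps) <= 1.
Proof.
case/andP=> eps0 eps1; elim: j => [|j IH]; first by rewrite expr0 mul0r addr0 mulr1.
rewrite exprS -natr1.
have qj0 : 0 <= (1 - eps) ^+ j by rewrite exprn_ge0 // subr_ge0.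
have j0 : 0 <= (j%:R : R) by exact: ler0n.
have : 0 <= (1 - eps) ^+ j * (j%:R + 1) * (eps * eps) by rewrite !mulr_ge0 ?addr_ge0.
nra.
Qed.

Lemma exists_exprn_le (R : archiRealFieldType) (q e : R) :
  0 <= q < 1 -> 0 < e -> exists j, q ^+ j <= e.
Proof.
case/andP=> q0 q1 e0; have eps0 : 0 < 1 - q by rewrite subr_gt0.
have ub0 : 0 <= 1 / (e * (1 - q)) by rewrite divr_ge0 // ltW // mulr_gt0.
have := archi_boundP ub0; set J := Num.Def.archi_bound _ => hJ.
rewrite ltr_pdivrMr ?mulr_gt0 // in hJ.
have eps_bounds : 0 <= 1 - q <= 1 by apply/andP; lra.
exists J; have := bernoulli_le1 J eps_bounds; rewrite subKr.
have qJ0 : 0 <= q ^+ J by exact: exprn_ge0.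
have Je0 : 0 <= (J%:R : R) * (1 - q) by rewrite mulr_ge0 ?ler0n // ltW.
nra.
Qed.

Lemma sup_range_eq1 (R : realType) (u : nat -> R) : (forall n, u n <= 1) ->
  (forall e, 0 < e -> exists n, 1 - e <= u n) -> sup (range u) = 1.
Proof.
move=> u1 u_near1; apply/le_anti/andP; split.
  by apply: ge_sup; [exists (u 0%N), 0%N | move=> x [n _ <-]].
rewrite leNgt; apply/negP => sup_lt1.
have ub : has_ubound (range u) by exists 1 => x [n _ <-].
have /u_near1 [n un] : 0 < (1 - sup (range u)) / 2 by rewrite divr_gt0 // subr_gt0.
have : u n <= sup (range u) by apply: ub_le_sup => //; exists n.
lra.
Qed.

Section OneStep.
Variables (R : realType) (S M : finType) (G : cgs R S M).

Definition exp_next (p1 p2 : {ffun M -> R}) (s : S) (F : S -> R) : R :=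
  \sum_(a1 : M) \sum_(a2 : M)
       p1 a1 * p2 a2 * \sum_(t : S) delta G s a1 a2 t * F t.

Lemma delta_ge0 s a1 a2 t : 0 <= delta G s a1 a2 t.
Proof. by case: (delta_distr G s a1 a2) => ->. Qed.

Lemma exp_nextD p1 p2 s F H :
  exp_next p1 p2 s (fun t => F t + H t) = exp_next p1 p2 s F + exp_next p1 p2 s H.
Proof.
rewrite /exp_next -big_split; apply: eq_bigr => a1 _.
rewrite -big_split; apply: eq_bigr => a2 _.
rewrite /= -mulrDr -big_split /=; congr (_ * _).
by apply: eq_bigr => t _; rewrite mulrDr.
Qed.

Lemma exp_nextZ p1 p2 s c F :
  exp_next p1 p2 s (fun t => c * F t) = c * exp_next p1 p2 s F.
Proof.
rewrite /exp_next mulr_sumr; apply: eq_bigr => a1 _.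
rewrite mulr_sumr; apply: eq_bigr => a2 _.
rewrite [RHS]mulrCA; congr (_ * _).
by rewrite mulr_sumr; apply: eq_bigr => t _; rewrite mulrCA.
Qed.

Variables (p1 p2 : {ffun M -> R}).
Hypotheses (p1_distr : is_distr p1) (p2_distr : is_distr p2).

Lemma exp_next_cst s c : exp_next p1 p2 s (fun=> c) = c.
Proof.
case: p1_distr p2_distr => _ sum1 [_ sum2]; rewrite /exp_next.
have delta_cst a1 a2 : \sum_(t : S) delta G s a1 a2 t * c = c.
  by rewrite -mulr_suml; case: (delta_distr G s a1 a2) => _ ->; rewrite mul1r.
under eq_bigr do under eq_bigr do rewrite delta_cst -mulrA.
under eq_bigr do rewrite -mulr_sumr -mulr_suml sum2 mul1r.
by rewrite -mulr_suml sum1 mul1r.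
Qed.

Lemma ler_exp_next s F H : (forall t, F t <= H t) ->
  exp_next p1 p2 s F <= exp_next p1 p2 s H.
Proof.
case: p1_distr p2_distr => ge1 _ [ge2 _] FH.
apply: ler_sum => a1 _; apply: ler_sum => a2 _.
apply: ler_wpM2l; first by rewrite mulr_ge0.
by apply: ler_sum => t _; apply: ler_wpM2l => //; exact: delta_ge0.
Qed.

Lemma exp_next1B s F :
  exp_next p1 p2 s (fun t => 1 - F t) = 1 - exp_next p1 p2 s F.
Proof.
have -> : (fun t => 1 - F t) = (fun t => 1 + (-1) * F t).
  by apply: funext => t; rewrite mulN1r.
by rewrite exp_nextD exp_next_cst exp_nextZ mulN1r.
Qed.

End OneStep.

Section Reach.
Variables (R : realType) (S M : finType) (G : cgs R S M).
Variables (pi1 pi2 : strat R S M) (X : {set S}).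
Hypothesis pi1_distr : forall h s, is_distr (pi1 h s).
Hypothesis pi2_distr : forall h s, is_distr (pi2 h s).
Local Notation rw := (reach_within G pi1 pi2 X).

Lemma reach_withinS n h s : s \notin X ->
  rw n.+1 h s = exp_next G (pi1 h s) (pi2 h s) s (rw n (rcons h s)).
Proof. by move=> sNX; rewrite /= (negbTE sNX). Qed.

Lemma reach_within_in n h s : s \in X -> rw n h s = 1.
Proof. by move=> sX; case: n => [|n] /=; rewrite sX. Qed.

Lemma reach_within_bounds n h s : 0 <= rw n h s <= 1.
Proof.
elim: n h s => [|n IH] h s.
  by case: (boolP (s \in X)) => sX; rewrite /= ?(negbTE sX) ?sX ?lexx ?ler01.
case: (boolP (s \in X)) => sX; first by rewrite reach_within_in // ler01 lexx.
have exp_cst := exp_next_cst G (pi1_distr h s) (pi2_distr h s) s.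
rewrite reach_withinS // -[0]exp_cst -[1]exp_cst.
by apply/andP; split; apply: ler_exp_next => // t; case/andP: (IH (rcons h s) t).
Qed.

(* Markov property of the failure probability: after [k] steps the remaining
   [m] steps fail with probability at most [B], whatever the history. *)
Lemma reach_within_failD m B : 0 <= B -> (forall h s, 1 - rw m h s <= B) ->
  forall k h s, 1 - rw (k + m) h s <= B * (1 - rw k h s).
Proof.
move=> B0 failB; elim=> [|k IH] h s.
  case: (boolP (s \in X)) => sX; first by rewrite !reach_within_in // subrr mulr0.
  by rewrite add0n /= (negbTE sX) subr0 mulr1.
case: (boolP (s \in X)) => sX; first by rewrite !reach_within_in // subrr mulr0.
rewrite addSn !reach_withinS // -!exp_next1B // -exp_nextZ.
exact: ler_exp_next.
Qed.

Lemma reach_within_failM m B : 0 <= B -> (forall h s, 1 - rw m h s <= B) ->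
  forall j h s, 1 - rw (j * m) h s <= B ^+ j.
Proof.
move=> B0 failB; elim=> [|j IH] h s.
  by rewrite mul0n expr0 gerBl; case/andP: (reach_within_bounds 0 h s).
rewrite mulSn addnC exprS.
apply: le_trans (reach_within_failD B0 failB (j * m) h s) _.
by apply: ler_wpM2l.
Qed.

Lemma prob_reach_eq1 m eps : 0 < eps -> (forall h s, eps <= rw m h s) ->
  forall s, prob_reach G pi1 pi2 X s = 1.
Proof.
move=> eps0 rw_lb s; have eps1 : eps <= 1.
  by apply: le_trans (rw_lb [::] s) _; case/andP: (reach_within_bounds m [::] s).
apply: sup_range_eq1 => [n|e e0]; first by case/andP: (reach_within_bounds n [::] s).
have [j qj] : exists j, (1 - eps) ^+ j <= e.
  by apply: exists_exprn_le e0; apply/andP; lra.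
exists (j * m)%N; suff : 1 - rw (j * m) [::] s <= (1 - eps) ^+ j by lra.
by apply: reach_within_failM => [|h s']; [lra | have := rw_lb h s'; lra].
Qed.

End Reach.

Lemma prob_reach_in (R : realType) (S M : finType) (G : cgs R S M) pi1 pi2
  (X : {set S}) s : s \in X -> prob_reach G pi1 pi2 X s = 1.
Proof.
move=> sX; apply: sup_range_eq1 => [n|e e0]; first by rewrite reach_within_in.
by exists 0%N; rewrite reach_within_in // gerBl ltW.
Qed.

Lemma prob_reach_eq0 (R : realType) (S M : finType) (G : cgs R S M) pi1 pi2
  (X : {set S}) s : (forall n, reach_within G pi1 pi2 X n [::] s = 0) ->
  prob_reach G pi1 pi2 X s = 0.
Proof.
move=> rw0; have ub : has_ubound (range (fun n => reach_within G pi1 pi2 X n [::] s)).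
  by exists 0 => x [n _ <-]; rewrite rw0.
apply/le_anti/andP; split.
  by apply: ge_sup; [exists 0, 0%N | move=> x [n _ <-]; rewrite rw0].
by apply: ub_le_sup => //; exists 0%N.
Qed.

Section Attractor.
Variables (R : realType) (S M : finType) (G : cgs R S M) (X : {set S}).
Variable xi1 : selector R S M.
Hypothesis xi1_sel : is_selector1 G xi1.

Lemma xi1_distr s : is_distr (xi1 s). Proof. by case: (xi1_sel s). Qed.

Definition succ_prob s a2 t := \sum_(a1 : M) xi1 s a1 * delta G s a1 a2 t.

Lemma succ_prob_ge0 s a2 t : 0 <= succ_prob s a2 t.
Proof.
apply: sumr_ge0 => a1 _; apply: mulr_ge0; last exact: delta_ge0.
by case: (xi1_distr s) => ->.
Qed.

Lemma exp_next_succ_prob p2 s F : exp_next G (xi1 s) p2 s F =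
  \sum_(a2 : M) p2 a2 * \sum_(t : S) succ_prob s a2 t * F t.
Proof.
rewrite /exp_next exchange_big; apply: eq_bigr => a2 _; apply/esym.
rewrite (eq_bigr (fun t => \sum_a1 xi1 s a1 * delta G s a1 a2 t * F t)); last first.
  by move=> t _; rewrite mulr_suml.
rewrite exchange_big mulr_sumr; apply: eq_bigr => a1 _.
under eq_bigr do rewrite -mulrA.
by rewrite -mulr_sumr mulrCA mulrA.
Qed.

Lemma succ_prob_lb : exists2 eta : R, 0 < eta <= 1 &
  forall s a2 t, 0 < succ_prob s a2 t -> eta <= succ_prob s a2 t.
Proof.
pose e := \big[Num.min/1]_(x : S * M * S | 0 < succ_prob x.1.1 x.1.2 x.2)
            succ_prob x.1.1 x.1.2 x.2.
have e0 : 0 < e.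
  by apply: (big_ind (fun v => 0 < v)) => // x y x0 y0; rewrite lt_min x0 y0.
exists (Num.min e 1); first by rewrite lt_min e0 ltr01 ge_min lexx orbT.
move=> s a2 t pos; rewrite ge_min; apply/orP; left.
by rewrite /e (bigD1 (s, a2, t)) //= ge_min lexx.
Qed.

Fixpoint attr k : {set S} := if k is k'.+1 then
  attr k' :|: [set s | [forall a2 in gam2 G s, [exists t in attr k', 0 < succ_prob s a2 t]]]
  else X.

Lemma subset_attr k : X \subset attr k.
Proof. by elim: k => [|k IH] //=; apply: fintype.subset_trans IH (finset.subsetUl _ _). Qed.

Lemma attr_stable : exists k, attr k.+1 = attr k.
Proof.
apply: contrapT => unstable.
have card_attr k : (k <= #|attr k|)%N.
  elim: k => [//|k IH]; apply: leq_ltn_trans IH (proper_card _).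
  rewrite finset.properEneq finset.subsetUl andbT.
  by apply/eqP => e; apply: unstable; exists k; rewrite [RHS]e.
by have := card_attr #|S|.+1; rewrite leqNgt ltnS max_card.
Qed.

Lemma reach_within_attr pi2 (pi2_strat : is_strat2 G pi2) eta :
  0 < eta <= 1 -> (forall s a2 t, 0 < succ_prob s a2 t -> eta <= succ_prob s a2 t) ->
  forall k n h s, (k <= n)%N -> s \in attr k ->
  eta ^+ k <= reach_within G (memoryless xi1) pi2 X n h s.
Proof.
have pi1_distr h s : is_distr (memoryless xi1 h s) by exact: xi1_distr.
have pi2_distr h s : is_distr (pi2 h s) by case: (pi2_strat h s).
case/andP=> eta0 eta1 eta_lb; elim=> [|k IH] n h s kn s_attr.
  by rewrite expr0 reach_within_in.
case/setUP: s_attr => [s_attr|].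
  apply: le_trans (IH n h s (ltnW kn) s_attr).
  by rewrite exprS ler_piMl // exprn_ge0 // ltW.
rewrite inE => /forallP s_attr.
case: (boolP (s \in X)) => sX; first by rewrite reach_within_in // exprn_ile1 // ltW.
case: n kn => [//|n] kn.
rewrite reach_withinS // /memoryless exp_next_succ_prob.
case: (pi2_distr h s) => pi2_ge0 pi2_sum1.
apply: le_trans (_ : \sum_a2 pi2 h s a2 * eta ^+ k.+1 <= _).
  by rewrite -mulr_suml pi2_sum1 mul1r.
apply: ler_sum => a2 _; case: (boolP (a2 \in gam2 G s)) => a2_gam; last first.
  by case: (pi2_strat h s) => _ ->//; rewrite !mul0r.
apply: ler_wpM2l => //.
move: (s_attr a2); rewrite a2_gam => /existsP [t /andP [t_attr t_pos]].
rewrite (bigD1 t) //= exprS.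
apply: le_trans
  (_ : succ_prob s a2 t * reach_within G (memoryless xi1) pi2 X n (rcons h s) t <= _).
  by apply: ler_pM; [exact: ltW | exact: exprn_ge0 (ltW eta0) | exact: eta_lb t_pos | exact: IH].
rewrite lerDl; apply: sumr_ge0 => t' _; apply: mulr_ge0; first exact: succ_prob_ge0.
by case/andP: (reach_within_bounds G X pi1_distr pi2_distr n (rcons h s) t').
Qed.

Lemma reach_within_trap k (xi2 : selector R S M) :
  (forall s, s \notin attr k -> forall a2, xi2 s a2 != 0 ->
     forall t, t \in attr k -> succ_prob s a2 t = 0) ->
  forall n h s, s \notin attr k ->
  reach_within G (memoryless xi1) (memoryless xi2) X n h s = 0.
Proof.
move=> xi2_trap; elim=> [|n IH] h s s_out; have sNX : s \notin X.
- by apply: contra s_out; apply/fintype.subsetP/subset_attr.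
- by rewrite /= (negbTE sNX).
- by apply: contra s_out; apply/fintype.subsetP/subset_attr.
rewrite reach_withinS // /memoryless exp_next_succ_prob big1 // => a2 _.
case: (eqVneq (xi2 s a2) 0) => [-> | a2_played]; first by rewrite mul0r.
rewrite big1 ?mulr0 // => t _.
case: (boolP (t \in attr k)) => t_attr; first by rewrite xi2_trap // mul0r.
by rewrite IH // mulr0.
Qed.

(* Stability says that no state outside [attr k] enters [attr k.+1]: there
   some available move of player 2 gives [attr k] probability zero. *)
Lemma trap_selector k (m0 : M) : attr k.+1 = attr k ->
  exists xi2, [/\ is_selector2 G xi2, pure_selector xi2 &
   forall s, s \notin attr k -> forall a2, xi2 s a2 != 0 ->
     forall t, t \in attr k -> succ_prob s a2 t = 0].
Proof.
move=> stable.
pose a s := if [pick a in gam2 G s | ~~ [exists t in attr k, 0 < succ_prob s a t]]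
  is Some a then a else odflt m0 [pick a in gam2 G s].
have a_gam s : a s \in gam2 G s.
  rewrite /a; case: pickP => [x /andP [] // | _].
  case: pickP => [// | none]; have /set0Pn [y y_gam] := gam2_nonempty G s.
  by have := none y; rewrite y_gam.
have a_avoids s : s \notin attr k -> ~~ [exists t in attr k, 0 < succ_prob s (a s) t].
  move=> s_out; have : s \notin attr k.+1 by rewrite stable.
  rewrite /= !inE negb_or => /andP [_ all_hit].
  rewrite /a; case: pickP => [x /andP [] // | none].
  case/negP: all_hit; apply/forallP => x; apply/implyP => x_gam.
  by have := none x; rewrite x_gam => /negbFE.
exists (fun s => [ffun a2 => if a2 == a s then (1 : R) else 0]); split.
- move=> s; split; first split.
  + by move=> x; rewrite ffunE; case: eqP; rewrite ?ler01 ?lexx.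
  + rewrite (bigD1 (a s)) //= ffunE eqxx big1 ?addr0 // => x /negbTE xNa.
    by rewrite ffunE xNa.
  + by move=> x x_gam; rewrite ffunE; case: eqP => // xa; rewrite xa a_gam in x_gam.
- by move=> s; exists (a s).
- move=> s s_out a2; rewrite ffunE; case: (eqVneq a2 (a s)) => [-> _ | _]; last by rewrite eqxx.
  move=> t t_attr; have := succ_prob_ge0 s (a s) t; rewrite le_eqVlt => /orP [/eqP <- // | pos].
  by case/negP: (a_avoids s s_out); apply/existsP; exists t; rewrite t_attr pos.
Qed.

Lemma attr_full k : attr k.+1 = attr k ->
  (forall xi2, is_selector2 G xi2 -> pure_selector xi2 ->
     forall s, prob_reach G (memoryless xi1) (memoryless xi2) X s = 1) ->
  forall s, s \in attr k.
Proof.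
move=> stable reach1 s; apply: contraT => s_out.
have /set0Pn [m0 _] := gam2_nonempty G s.
have [xi2 [xi2_sel xi2_pure xi2_trap]] := trap_selector m0 stable.
have := reach1 xi2 xi2_sel xi2_pure s.
rewrite prob_reach_eq0 => [/eqP|n]; first by rewrite eq_sym oner_eq0.
exact: reach_within_trap xi2_trap n [::] s s_out.
Qed.

End Attractor.

Theorem lemma1 (R : realType) (S M : finType) (G : cgs R S M) (T : {set S})
  (habs : forall s, s \in T :|: W2 G T -> absorbing G s)
  (xi1 : selector R S M) (hxi1 : is_selector1 G xi1) :
  is_proper G T (memoryless xi1) <->
  (forall xi2 : selector R S M, is_selector2 G xi2 -> pure_selector xi2 ->
     forall s : S, prob_reach G (memoryless xi1) (memoryless xi2) (T :|: W2 G T) s = 1).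
Proof.
set X := T :|: W2 G T.
split=> [proper xi2 xi2_sel _ s | reach1 pi2 pi2_strat s _].
  case: (boolP (s \in X)) => sX; first exact: prob_reach_in.
  by apply: proper => // h s'; apply: xi2_sel.
have [k stable] := attr_stable G X xi1.
have [eta eta_bounds eta_lb] := succ_prob_lb G xi1.
have eta0 : 0 < eta by case/andP: eta_bounds.
have pi1_distr h s' : is_distr (memoryless xi1 h s') by exact: xi1_distr hxi1 s'.
have pi2_distr h s' : is_distr (pi2 h s') by case: (pi2_strat h s').
apply: (prob_reach_eq1 pi1_distr pi2_distr (m := k) (exprn_gt0 k eta0)) => h s'.
have s'_attr := attr_full hxi1 stable reach1 s'.
exact (reach_within_attr hxi1 pi2_strat eta_bounds eta_lb h (leqnn k) s'_attr).
Qed.
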